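(* Let $f,g$ be proper, closed, convex, $K\in\mathbb{R}^{n\times p}$, and let $\mu_f\ge0$, $\mu_{g^*}\ge0$ be such that $f-\tfrac{\mu_f}{2}\|\cdot\|^2$ and $g^*-\tfrac{\mu_{g^*}}{2}\|\cdot\|^2$ are convex. Let $\dot y\in\mathbb{R}^n$, $\hat x^k\in\mathbb{R}^p$, $x^k\in\mathrm{dom} f$, $L_k>0$, and $\beta_{k-1}\ge\beta_k>0$. Define $$y^{k+1}:=\mathrm{prox}_{g^*/\beta_k}\big(\dot y+\tfrac{1}{\beta_k}K\hat x^k\big),\qquad x^{k+1}:=\mathrm{prox}_{f/L_k}\big(\hat x^k-\tfrac{1}{L_k}K^\top y^{k+1}\big).$$ Then for every $x\in\mathrm{dom} f$ and every $\tau_k\in(0,1]$, $$\begin{aligned}F_{\beta_k}(x^{k+1},\dot y)\le{}&(1-\tau_k)F_{\beta_{k-1}}(x^k,\dot y)+\tau_k\mathcal{L}(x,y^{k+1})+\tfrac{L_k\tau_k^2}{2}\big\|\tfrac{1}{\tau_k}[\hat x^k-(1-\tau_k)x^k]-x\big\|^2\\&-\tfrac{\mu_f(1-\tau_k)\tau_k}{2}\|x-x^k\|^2-\tfrac{\tau_k^2}{2}(L_k+\mu_f)\big\|\tfrac{1}{\tau_k}[x^{k+1}-(1-\tau_k)x^k]-x\big\|^2\\&-\tfrac{L_k}{2}\|x^{k+1}-\hat x^k\|^2+\tfrac{1}{2(\mu_{g^*}+\beta_k)}\|K(x^{k+1}-\hat x^k)\|^2\\&-\tfrac{1-\tau_k}{2}\big[\tau_k\beta_k-(\beta_{k-1}-\beta_k)\big]\big\|\nabla_u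 g_{\beta_k}(Kx^k,\dot y)-\dot y\big\|^2.\end{aligned}$$
   Context: $g^*$ is the Fenchel conjugate of $g$; $\mathcal{L}(x,y):=f(x)+\langle Kx,y\rangle-g^*(y)$. For a proper closed convex $h$ and $\gamma>0$, $\mathrm{prox}_{\gamma h}(x):=\arg\min_{z}\{h(z)+\tfrac{1}{2\gamma}\|z-x\|^2\}$. For $\beta>0$, $g_\beta(u,\dot y):=\max_{y}\{\langle u,y\rangle-g^*(y)-\tfrac{\beta}{2}\|y-\dot y\|^2\}$, whose gradient in $u$ is $\nabla_u g_\beta(u,\dot y)=\mathrm{prox}_{g^*/\beta}(\dot y+\tfrac1\beta u)$, and $F_\beta(x,\dot y):=f(x)+g_\beta(Kx,\dot y)$. Norms are Euclidean. *)

From mathcomp Require Import all_boot all_order all_algebra.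
From mathcomp Require Import boolp classical_sets reals ereal topology normedtype sequences.
Set Implicit Arguments.
Unset Strict Implicit.
Unset Printing Implicit Defensive.
Import Order.TTheory GRing.Theory Num.Theory.
Import numFieldNormedType.Exports.
Local Open Scope classical_set_scope.
Local Open Scope ring_scope.

Section ConvexDefs.
Variable R : realType.

Definition vdot (n : nat) (u v : 'cV[R]_n) : R := \sum_(i < n) u i 0 * v i 0.
Definition sqnorm (n : nat) (u : 'cV[R]_n) : R := vdot u u.

Definition dom (n : nat) (h : 'cV[R]_n -> \bar R) : set 'cV[R]_n :=
  [set x | (h x < +oo)%E].

Definition proper_fun (n : nat) (h : 'cV[R]_n -> \bar R) : Prop :=
  (forall x, (-oo < h x)%E) /\ (exists x, (h x < +oo)%E).

Definition convex_fun (n : nat) (h : 'cV[R]_n -> \bar R) : Prop :=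
  forall (x y : 'cV[R]_n) (t : R), 0 <= t <= 1 ->
    (h (t *: x + (1 - t) *: y)%R <= t%:E * h x + (1 - t)%:E * h y)%E.

(* closed = lower semicontinuous: all sublevel sets are (sequentially) closed *)
Definition closed_fun (n : nat) (h : 'cV[R]_n -> \bar R) : Prop :=
  forall (u : nat -> 'cV[R]_n) (x : 'cV[R]_n) (a : R),
    (forall i : 'I_n, (fun k => u k i 0) @ \oo --> (x i 0 : R)) ->
    (forall k, (h (u k) <= a%:E)%E) -> (h x <= a%:E)%E.

Definition sub_sq (n : nat) (h : 'cV[R]_n -> \bar R) (mu : R) : 'cV[R]_n -> \bar R :=
  fun x => (h x - (mu / 2 * sqnorm x)%:E)%E.

Definition fconj (n : nat) (g : 'cV[R]_n -> \bar R) : 'cV[R]_n -> \bar R :=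
  fun y => ereal_sup (range (fun x => ((vdot x y)%:E - g x)%E)).

Definition is_prox (n : nat) (gamma : R) (h : 'cV[R]_n -> \bar R) (x z : 'cV[R]_n) : Prop :=
  forall w, (h z + (1 / (2 * gamma) * sqnorm (z - x)%R)%:E
             <= h w + (1 / (2 * gamma) * sqnorm (w - x)%R)%:E)%E.
Definition prox (n : nat) (gamma : R) (h : 'cV[R]_n -> \bar R) (x : 'cV[R]_n) : 'cV[R]_n :=
  xget x [set z | is_prox gamma h x z].

Definition g_beta (n : nat) (g : 'cV[R]_n -> \bar R) (beta : R) (u ydot : 'cV[R]_n) : \bar R :=
  ereal_sup (range (fun y =>
    ((vdot u y)%:E - fconj g y - (beta / 2 * sqnorm (y - ydot)%R)%:E)%E)).

Definition grad_g_beta (n : nat) (g : 'cV[R]_n -> \bar R) (beta : R) (u ydot : 'cV[R]_n)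
  : 'cV[R]_n := prox (1 / beta) (fconj g) (ydot + beta^-1 *: u).

Definition F_beta (n p : nat) (f : 'cV[R]_p -> \bar R) (g : 'cV[R]_n -> \bar R)
  (K : 'M[R]_(n, p)) (beta : R) (x : 'cV[R]_p) (ydot : 'cV[R]_n) : \bar R :=
  (f x + g_beta g beta (K *m x) ydot)%E.

Definition Lag (n p : nat) (f : 'cV[R]_p -> \bar R) (g : 'cV[R]_n -> \bar R)
  (K : 'M[R]_(n, p)) (x : 'cV[R]_p) (y : 'cV[R]_n) : \bar R :=
  (f x + (vdot (K *m x) y)%:E - fconj g y)%E.

End ConvexDefs.

(** The theorem [lemma2] adds the primal and dual step inequalities. *)

From mathcomp Require Import all_boot all_order all_algebra.
From mathcomp Require Import boolp classical_sets reals ereal topology normedtype sequences.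
Import Order.TTheory GRing.Theory Num.Theory.
Import numFieldNormedType.Exports.
Local Open Scope classical_set_scope.
Local Open Scope ring_scope.
From mathcomp Require Import ring lra.

Set Implicit Arguments.
Unset Strict Implicit.

(** Reduces an identity between sums of products of coordinates (such as
    [vdot] and [sqnorm] expressions) to a single coordinate, to be closed by
    [ring] or [field]. *)
Ltac coordinatewise :=
  rewrite /sqnorm /vdot ?mulr_sumr ?mulr_suml -?sumrN;
  repeat (rewrite -big_split /=); apply: eq_bigr => i _; rewrite !mxE.

Section VectorAlgebra.
Variable R : realType.
Implicit Types (n p : nat) (t : R).

Lemma sqnorm_ge0 n (u : 'cV[R]_n) : 0 <= sqnorm u.
Proof. by apply: sumr_ge0 => i _; rewrite -expr2 sqr_ge0. Qed.

Lemma vdot_mulmx n p (K : 'M[R]_(n, p)) x y : vdot (K *m x) y = vdot x (K^T *m y).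
Proof.
rewrite /vdot; under eq_bigr do rewrite mxE big_distrl /=.
rewrite exchange_big /=; apply: eq_bigr => j _.
by rewrite mxE big_distrr /=; apply: eq_bigr => i _; rewrite !mxE; ring.
Qed.

Lemma sqnorm_comb n (w z a : 'cV[R]_n) t :
  sqnorm (t *: w + (1 - t) *: z - a) =
  t * sqnorm (w - a) + (1 - t) * sqnorm (z - a) - t * (1 - t) * sqnorm (w - z).
Proof. by coordinatewise; ring. Qed.

(** The rescaled distances appearing in the statement of the main theorem. *)
Lemma sqnorm_rescale n (a b x : 'cV[R]_n) t : t != 0 ->
  t ^+ 2 * sqnorm (t^-1 *: (a - (1 - t) *: b) - x) = sqnorm (t *: x + (1 - t) *: b - a).
Proof. by move=> t0; coordinatewise; field. Qed.

Lemma sqnorm_coord n (v : 'cV[R]_n) i : v i 0 * v i 0 <= sqnorm v.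
Proof.
rewrite /sqnorm /vdot (bigD1 i) //= lerDl.
by apply: sumr_ge0 => j _; rewrite -expr2 sqr_ge0.
Qed.

Lemma coord_close n (v w : 'cV[R]_n) i (e : R) : 0 < e ->
  sqnorm (v - w) < e * e -> `|w i 0 - v i 0| < e.
Proof.
move=> e_gt0 vw_lt.
have := sqnorm_coord (v - w) i; rewrite !mxE => coord_le.
have sq_abs : `|w i 0 - v i 0| ^+ 2 = (v i 0 - w i 0) ^+ 2.
  by rewrite real_normK ?num_real //; ring.
have := normr_ge0 (w i 0 - v i 0).
by move: sq_abs; rewrite !expr2 => *; nra.
Qed.

Lemma young n (d e : 'cV[R]_n) (k : R) : 0 < k ->
  vdot d e <= k / 2 * sqnorm e + 1 / (2 * k) * sqnorm d.
Proof.
move=> k_gt0; have := sqnorm_ge0 (k *: e - d).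
have -> : sqnorm (k *: e - d) = k * k * sqnorm e - 2 * k * vdot d e + sqnorm d.
  by coordinatewise; ring.
have -> : k / 2 * sqnorm e + 1 / (2 * k) * sqnorm d =
  (k * k * sqnorm e + sqnorm d) / (2 * k) by field; lra.
by move=> ?; rewrite ler_pdivlMr; lra.
Qed.

Lemma sqnorm_shift n (v yd u : 'cV[R]_n) (beta : R) : beta != 0 ->
  beta / 2 * sqnorm (v - (yd + beta^-1 *: u)) =
  beta / 2 * sqnorm (v - yd) - vdot u v + (vdot u yd + sqnorm u / (2 * beta)).
Proof.
by move=> b0; coordinatewise; field; rewrite ?mulf_neq0 ?pnatr_eq0 //; lra.
Qed.

End VectorAlgebra.

Section RealSequences.
Variable R : realType.

Lemma prox_weight (c : R) : 0 < c -> 1 / (2 * (1 / c)) = c / 2.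
Proof. by move=> c_gt0; field; lra. Qed.

Lemma le_limit_t (A B k : R) : 0 <= k ->
  (forall t, 0 < t <= 1 -> A + k * (1 - t) <= B) -> A + k <= B.
Proof.
move=> k_ge0 H; apply/ler_addgt0Pr => e e_gt0.
have ke_gt0 : 0 < k + e by lra.
have t01 : 0 < e / (k + e) <= 1.
  by rewrite divr_gt0 //= ler_pdivrMr // mul1r; lra.
have := H _ t01; have : k * (e / (k + e)) <= e by rewrite mulrA ler_pdivrMr //; nra.
lra.
Qed.

Lemma cvg_natP (u : nat -> R) (l : R) :
  u @ \oo --> l <-> forall e, 0 < e -> exists N, forall k, (N <= k)%N -> `|l - u k| < e.
Proof.
rewrite cvgrPdist_lt; split => H e e_gt0.
  by have [N _ HN] := H e e_gt0; exists N => k; apply: HN.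
by have [N HN] := H e e_gt0; exists N.
Qed.

Lemma cauchy_natP (u : nat -> R) :
  (forall e, 0 < e -> exists N, forall j k, (N <= j)%N -> (N <= k)%N -> `|u j - u k| < e) ->
  exists l : R, u @ \oo --> l.
Proof.
move=> H; suff : cvg (u @ \oo) by exists (limn u).
apply: cauchy_cvg; apply/cauchyP => e e_gt0.
have [N HN] := H e e_gt0.
by exists (u N); exists N => // k /= Nk; apply: HN.
Qed.

Lemma inv_succ_small (e : R) : 0 < e -> exists N, forall k, (N <= k)%N -> k.+1%:R^-1 < e.
Proof.
move=> e_gt0; have [k0] := ltr_add_invr e_gt0; rewrite add0r => k0_lt.
exists k0 => k k0k; apply: le_lt_trans k0_lt.
by rewrite ler_pV2 ?inE ?ltr0Sn ?unitfE ?pnatr_eq0 // ler_nat ltnS.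
Qed.

End RealSequences.

Lemma dom_fin (R : realType) n (h : 'cV[R]_n -> \bar R) x :
  (forall x, (-oo < h x)%E) -> dom h x -> exists r, h x = r%:E.
Proof. by move=> /(_ x); rewrite /dom /=; case: (h x) => [r| |] // _ _; exists r. Qed.

Section StrongConvexity.
Variables (R : realType) (n : nat) (h : 'cV[R]_n -> \bar R) (mu : R).
Hypotheses (h_gtNy : forall x, (-oo < h x)%E) (h_strong : convex_fun (sub_sq h mu)).

Lemma strong_convex_fin x y a b t : h x = a%:E -> h y = b%:E -> 0 <= t <= 1 ->
  exists2 c, h (t *: x + (1 - t) *: y) = c%:E &
    c <= t * a + (1 - t) * b - mu / 2 * t * (1 - t) * sqnorm (x - y).
Proof.
move=> hx hy t01; have := h_strong x y t01.
rewrite /sub_sq hx hy -!EFinB -!EFinM -EFinD.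
have := sqnorm_comb x y 0 t; rewrite !subr0 => ->.
move: (h_gtNy (t *: x + (1 - t) *: y)).
by case: (h _) => [c| |] // _; rewrite -EFinB lee_fin => ?; exists c => //; lra.
Qed.

(** Quadratic growth of the proximal objective [h + c/2 |. - a|^2] away from a
    proximal point [z]: compare [z] with [t w + (1 - t) z] and let [t -> 0]. *)
Lemma prox_quadratic_growth (c : R) (a z w : 'cV[R]_n) (hz hw : R) :
  0 <= mu -> 0 < c -> is_prox (1 / c) h a z -> h z = hz%:E -> h w = hw%:E ->
  hz + c / 2 * sqnorm (z - a) + (mu + c) / 2 * sqnorm (w - z)
  <= hw + c / 2 * sqnorm (w - a).
Proof.
move=> mu_ge0 c_gt0 z_prox hzE hwE.
have k_ge0 : 0 <= (mu + c) / 2 * sqnorm (w - z).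
  by apply: mulr_ge0; [lra | exact: sqnorm_ge0].
apply: le_limit_t k_ge0 _.
move=> t t01; have t01' : 0 <= t <= 1 by lra.
have [ct ctE ct_le] := strong_convex_fin hwE hzE t01'.
have := z_prox (t *: w + (1 - t) *: z).
rewrite ctE hzE prox_weight // -!EFinD lee_fin sqnorm_comb => opt.
have : t * (hz + c / 2 * sqnorm (z - a) + (mu + c) / 2 * sqnorm (w - z) * (1 - t))
   <= t * (hw + c / 2 * sqnorm (w - a)) by lra.
by rewrite ler_pM2l; lra.
Qed.

End StrongConvexity.

Lemma prox_fin (R : realType) n (gamma : R) (h : 'cV[R]_n -> \bar R) a z w :
  is_prox gamma h a z -> (h w < +oo)%E -> (-oo < h z)%E -> exists s, h z = s%:E.
Proof.
move=> /(_ w); case: (h w) => [r| |] //; case: (h z) => [s| |] //.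
by move=> *; exists s.
Qed.

Lemma cvg_sqnorm (R : realType) n (x : nat -> 'cV[R]_n) (l : 'I_n -> R) (a : 'cV[R]_n) :
  (forall i, (fun k => x k i 0) @ \oo --> l i) ->
  (fun k => sqnorm (x k - a)) @ \oo --> sqnorm ((\col_i l i) - a).
Proof.
move=> x_cvg; rewrite /sqnorm /vdot.
apply: cvg_big => [|i _]; first exact: add_continuous.
under eq_fun do rewrite !mxE; rewrite !mxE.
by apply: cvgM; apply: cvgB => //; exact: cvg_cst.
Qed.

Section ProxExistence.
Variables (R : realType) (n : nat) (h : 'cV[R]_n -> \bar R).
Hypotheses (h_gtNy : forall x, (-oo < h x)%E) (h_closed : closed_fun h).

Lemma local_lower_bound z0 h0 : h z0 = h0%:E ->
  exists2 d : R, 0 < d & forall u, sqnorm (u - z0) < d -> ((h0 - 1)%:E <= h u)%E.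
Proof.
move=> hz0; apply: contrapT => no_bound.
have bad k : exists u : 'cV[R]_n, sqnorm (u - z0) < k.+1%:R^-1 /\ (h u < (h0 - 1)%:E)%E.
  apply: contrapT => no_bad; apply: no_bound; exists k.+1%:R^-1.
    by rewrite invr_gt0 ltr0Sn.
  move=> u u_near; apply: contrapT => /negP; rewrite -ltNge => hu.
  by apply: no_bad; exists u.
have [u hu] := choice bad.
suff : (h z0 <= (h0 - 1)%:E)%E by rewrite hz0 lee_fin; lra.
apply: (@h_closed u) => [i|k]; last exact: ltW (hu k).2.
apply/cvg_natP => e e_gt0; have [N HN] := inv_succ_small (mulr_gt0 e_gt0 e_gt0).
by exists N => k Nk; apply: coord_close => //; apply: lt_trans (HN _ Nk); exact: (hu k).1.
Qed.

Definition prox_lower_bound (c m : R) (a : 'cV[R]_n) : Prop :=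
  forall x b, h x = b%:E -> m <= b + c / 2 * sqnorm (x - a).

Lemma minimizing_limit_is_prox (c m : R) a (x : nat -> 'cV[R]_n) (b : nat -> R)
    (l : 'I_n -> R) : 0 < c -> prox_lower_bound c m a ->
  (forall k, h (x k) = (b k)%:E) ->
  (forall k, b k + c / 2 * sqnorm (x k - a) < m + k.+1%:R^-1) ->
  (forall i, (fun k => x k i 0) @ \oo --> l i) ->
  is_prox (1 / c) h a (\col_i l i).
Proof.
move=> c_gt0 m_lb hxb near_min x_cvg.
set zl := \col_i l i; set q := sqnorm (zl - a).
have zl_le (e : R) : 0 < e -> (h zl <= (m - c / 2 * q + e)%:E)%E.
  move=> e_gt0; have ec_gt0 : 0 < e / c by apply: divr_gt0.
  have [N1 HN1] := (cvg_natP _ _).1 (cvg_sqnorm (a := a) x_cvg) _ ec_gt0.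
  have e2_gt0 : 0 < e / 2 by lra.
  have [N2 HN2] := inv_succ_small e2_gt0.
  set N := maxn N1 N2.
  have N1k k : (N1 <= k + N)%N by rewrite (leq_trans (leq_maxl N1 N2)) ?leq_addl.
  have N2k k : (N2 <= k + N)%N by rewrite (leq_trans (leq_maxr N1 N2)) ?leq_addl.
  apply: (@h_closed (fun k => x (k + N)%N)) => [i|k].
    by rewrite mxE; move: (x_cvg i); rewrite -(cvg_shiftn N).
  rewrite hxb lee_fin; have := HN1 _ (N1k k); have := HN2 _ (N2k k).
  have := near_min (k + N)%N; rewrite -/q.
  move: (b _) (sqnorm _) ((k + N).+1%:R^-1) => bk qk ik near_k ik_lt q_near.
  have : c * (q - qk) <= c * (e / c) by rewrite ler_pM2l // (le_trans (ler_norm _)) ?ltW.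
  have -> : c * (e / c) = e by field; lra.
  lra.
have [bl hbl] : exists bl, h zl = bl%:E.
  by move: (h_gtNy zl) (zl_le 1 ltr01); case: (h zl) => [r| |] // *; exists r.
have bl_le : bl + c / 2 * q <= m.
  suff : bl <= m - c / 2 * q by lra.
  by apply/ler_addgt0Pr => e /zl_le; rewrite hbl lee_fin.
move=> w; rewrite prox_weight // hbl -/q.
move: (h_gtNy w); case hw: (h w) => [bw| |] // _; last by rewrite leey.
by rewrite -!EFinD lee_fin; have := m_lb _ _ hw; lra.
Qed.

Variable mu : R.
Hypothesis h_strong : convex_fun (sub_sq h mu).

(** Convexity propagates the local bound: [h] decreases at most linearly in
    the distance to [z0]. *)
Lemma convex_lower_bound z0 h0 (d : R) : 0 <= mu -> 0 < d -> h z0 = h0%:E ->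
  (forall u, sqnorm (u - z0) < d -> ((h0 - 1)%:E <= h u)%E) ->
  forall x b, h x = b%:E -> h0 - 1 - 2 * Num.sqrt (sqnorm (x - z0) / d) <= b.
Proof.
move=> mu_ge0 d_gt0 hz0 near_z0 x b hx.
have shrink t : sqnorm (t *: x + (1 - t) *: z0 - z0) = t ^+ 2 * sqnorm (x - z0).
  by coordinatewise; ring.
have mu_term t : 0 <= t <= 1 -> 0 <= mu / 2 * t * (1 - t) * sqnorm (x - z0).
  move=> t01; apply: mulr_ge0; last exact: sqnorm_ge0.
  by apply: mulr_ge0; [apply: mulr_ge0|]; lra.
move: shrink mu_term; set D := sqnorm (x - z0) => shrink mu_term.
set s := Num.sqrt (D / d); have s_ge0 : 0 <= s := sqrtr_ge0 _.
have [D_lt|d_le] := ltP D d.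
  by have := near_z0 x D_lt; rewrite hx lee_fin; lra.
have s_sq : s ^+ 2 = D / d by rewrite sqr_sqrtr // divr_ge0 //; lra.
have Ds : D = d * s ^+ 2 by rewrite s_sq; field; lra.
have s_ge1 : 1 <= s.
  have : 1 <= s ^+ 2 by rewrite s_sq ler_pdivlMr // mul1r.
  by rewrite expr2; nra.
set t := (2 * s)^-1; have ts : t * (2 * s) = 1 by rewrite mulVf //; lra.
have t01 : 0 <= t <= 1.
  have : 0 < t by rewrite invr_gt0; lra.
  by nra.
have [ct ctE] := strong_convex_fin h_gtNy h_strong hx hz0 t01; rewrite -/D => ct_le.
have : sqnorm (t *: x + (1 - t) *: z0 - z0) < d.
  rewrite shrink Ds expr2; have : (t * s) * (t * s) = 1 / 4 by nra.
  by nra.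
move=> /near_z0; rewrite ctE lee_fin => ct_ge; have mu_t := mu_term t t01.
have : t * (h0 - b) <= 1 by lra.
have : (2 * s) * (t * (h0 - b)) <= 2 * s by nra.
by rewrite mulrA (mulrC (2 * s)) ts mul1r; lra.
Qed.

(** The proximal objective [h + c/2 |. - a|^2] is bounded below: the
    quadratic term dominates the linear decrease of [h]. *)
Lemma prox_objective_lower_bound (c : R) (a z0 : 'cV[R]_n) h0 :
  0 <= mu -> 0 < c -> h z0 = h0%:E -> exists m0, prox_lower_bound c m0 a.
Proof.
move=> mu_ge0 c_gt0 hz0; have [d d_gt0 near_z0] := local_lower_bound hz0.
have cd_gt0 : 0 < c * d by apply: mulr_gt0.
set A0 := sqnorm (z0 - a); exists (h0 - 1 - 4 / (c * d) - c / 2 * A0) => x b hx.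
have := convex_lower_bound mu_ge0 d_gt0 hz0 near_z0 hx.
have : sqnorm (x - z0) <= 2 * sqnorm (x - a) + 2 * A0.
  have -> : 2 * sqnorm (x - a) + 2 * A0 = sqnorm (x - z0) + sqnorm (x + z0 - 2%:R *: a).
    by rewrite /A0; coordinatewise; ring.
  by rewrite lerDl sqnorm_ge0.
have := sqnorm_ge0 (x - z0); set D := sqnorm (x - z0); set X := sqnorm (x - a).
set s := Num.sqrt (D / d) => D_ge0 parallelogram b_ge.
have s_sq : s ^+ 2 = D / d by rewrite sqr_sqrtr // divr_ge0 //; lra.
have Ds : D = d * s ^+ 2 by rewrite s_sq; field; lra.
have : c * D <= c * (2 * X + 2 * A0) by rewrite ler_pM2l.
have -> : c * D = 4 * (c * d / 4 * s ^+ 2) by rewrite Ds; field.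
have square : c * d / 4 * s ^+ 2 - 2 * s + 4 / (c * d) = (c * d * s - 4) ^+ 2 / (4 * (c * d)).
  by field; lra.
have : 0 <= (c * d * s - 4) ^+ 2 / (4 * (c * d)).
  by apply: divr_ge0; [exact: sqr_ge0 | lra].
lra.
Qed.

(** Two near-minimizers are close: compare them with their midpoint. *)
Lemma near_minimizers_close (c m : R) (a xj xk : 'cV[R]_n) (bj bk ej ek : R) :
  0 <= mu -> prox_lower_bound c m a -> h xj = bj%:E -> h xk = bk%:E ->
  bj + c / 2 * sqnorm (xj - a) < m + ej -> bk + c / 2 * sqnorm (xk - a) < m + ek ->
  c * sqnorm (xj - xk) <= 4 * (ej + ek).
Proof.
move=> mu_ge0 m_lb hj hk near_j near_k.
have half : 0 <= (2^-1 : R) <= 1 by lra.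
have [cw cwE cw_le] := strong_convex_fin h_gtNy h_strong hj hk half.
have := m_lb _ _ cwE; rewrite sqnorm_comb => m_le.
have : 0 <= mu / 2 * 2^-1 * (1 - 2^-1) * sqnorm (xj - xk).
  by apply: mulr_ge0; [lra | exact: sqnorm_ge0].
lra.
Qed.

Lemma minimizing_sequence_cauchy (c m : R) a (x : nat -> 'cV[R]_n) (b : nat -> R) :
  0 <= mu -> 0 < c -> prox_lower_bound c m a ->
  (forall k, h (x k) = (b k)%:E) ->
  (forall k, b k + c / 2 * sqnorm (x k - a) < m + k.+1%:R^-1) ->
  forall i, exists l : R, (fun k => x k i 0) @ \oo --> l.
Proof.
move=> mu_ge0 c_gt0 m_lb hxb near_min i; apply: cauchy_natP => e e_gt0.
have ce_gt0 : 0 < c * (e * e) / 8 by apply: divr_gt0 => //; do 2 apply: mulr_gt0 => //.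
have [N HN] := inv_succ_small ce_gt0.
exists N => j k Nj Nk; apply: coord_close => //; rewrite -(ltr_pM2l c_gt0).
have := near_minimizers_close mu_ge0 m_lb (hxb k) (hxb j) (near_min k) (near_min j).
have := HN _ Nj; have := HN _ Nk.
by move: (sqnorm _) (j.+1%:R^-1) (k.+1%:R^-1) => D ij ik; lra.
Qed.

Lemma prox_exists (c : R) (a : 'cV[R]_n) : 0 <= mu -> 0 < c ->
  exists z, is_prox (1 / c) h a z.
Proof.
move=> mu_ge0 c_gt0.
have [[z0 z0_dom]|dom_empty] := pselect (exists z0, (h z0 < +oo)%E); last first.
  have infty w : h w = +oo%E.
    move: (h_gtNy w); case hw: (h w) => [r| |] // _.
    by case: dom_empty; exists w; rewrite hw ltry.
  by exists a => w; rewrite !infty.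
have [h0 hz0] := dom_fin h_gtNy z0_dom.
have [m0 m0_lb] := prox_objective_lower_bound a mu_ge0 c_gt0 hz0.
set S := [set r : R | exists x b, h x = b%:E /\ r = b + c / 2 * sqnorm (x - a)].
have S_inf : has_inf S.
  split; first by exists (h0 + c / 2 * sqnorm (z0 - a)), z0, h0.
  by exists m0 => _ [x [b [hx ->]]]; exact: m0_lb.
have m_lb : prox_lower_bound c (inf S) a.
  by move=> x b hx; apply: (ge_inf S_inf.2); exists x, b.
have near k : exists xb : 'cV[R]_n * R,
    h xb.1 = xb.2%:E /\ xb.2 + c / 2 * sqnorm (xb.1 - a) < inf S + k.+1%:R^-1.
  have k_gt0 : 0 < (k.+1%:R : R)^-1 by rewrite invr_gt0 ltr0Sn.
  by have [_ [x [b [hx ->]]] lt] := inf_adherent k_gt0 S_inf; exists (x, b).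
have [xb xbP] := choice near.
have hxb k := (xbP k).1; have near_min k := (xbP k).2.
have [l l_cvg] := choice (minimizing_sequence_cauchy mu_ge0 c_gt0 m_lb hxb near_min).
by exists (\col_i l i); exact: minimizing_limit_is_prox c_gt0 m_lb hxb near_min l_cvg.
Qed.

Lemma prox_spec (c : R) (a w : 'cV[R]_n) : 0 <= mu -> 0 < c -> dom h w ->
  is_prox (1 / c) h a (prox (1 / c) h a) /\ exists s, h (prox (1 / c) h a) = s%:E.
Proof.
move=> mu_ge0 c_gt0 w_dom.
have z_prox : is_prox (1 / c) h a (prox (1 / c) h a) by apply: xgetPex; exact: prox_exists.
by split=> //; exact: prox_fin z_prox w_dom (h_gtNy _).
Qed.

End ProxExistence.

Section FenchelConjugate.
Variables (R : realType) (n : nat) (g : 'cV[R]_n -> \bar R).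
Hypothesis g_proper : proper_fun g.

(** [g^*] never takes the value [-oo]: at a point [x0] of [dom g] it
    majorizes the finite value [<x0, y> - g x0]. *)
Lemma fconj_gtNy y : (-oo < fconj g y)%E.
Proof.
have [g_gtNy [x0 x0_dom]] := g_proper; have [b gx0] := dom_fin g_gtNy x0_dom.
apply: (@lt_le_trans _ _ ((vdot x0 y)%:E - g x0)%E); first by rewrite gx0 -EFinB ltNyr.
by apply: ereal_sup_ubound; exists x0.
Qed.

(** [g^*] is closed, as a supremum of continuous affine functions. *)
Lemma fconj_closed : closed_fun (fconj g).
Proof.
have [g_gtNy _] := g_proper; move=> u y a u_cvg ub.
apply: ge_ereal_sup => _ [x _ <-].
move: (g_gtNy x); case gx: (g x) => [r| |] // _; last by rewrite /= leNye.
rewrite -EFinB lee_fin; apply/ler_addgt0Pr => e e_gt0.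
have le_a k : vdot x (u k) - r <= a.
  have := ub k; rewrite -lee_fin EFinB; apply: le_trans.
  by apply: ereal_sup_ubound; exists x => //; rewrite gx.
have cvg_dot : (fun k => vdot x (u k)) @ \oo --> vdot x y.
  apply: cvg_big => [|i _]; first exact: add_continuous.
  by apply: cvgM => //; exact: cvg_cst.
have [N HN] := (cvg_natP _ _).1 cvg_dot _ e_gt0.
have := HN N (leqnn N); have := le_a N.
by move: (vdot x (u N)) (vdot x y) => p q *; have := ler_norm (q - p); lra.
Qed.

End FenchelConjugate.

Section SmoothedFunction.
Variables (R : realType) (n : nat) (g : 'cV[R]_n -> \bar R).

Lemma g_beta_ge (beta : R) (v yd y : 'cV[R]_n) (t : R) : fconj g y = t%:E ->
  ((vdot v y - t - beta / 2 * sqnorm (y - yd))%:E <= g_beta g beta v yd)%E.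
Proof. by move=> gy; apply: ereal_sup_ubound; exists y => //; rewrite gy -!EFinB. Qed.

Lemma g_beta_antitone (beta beta' : R) (v yd : 'cV[R]_n) : beta <= beta' ->
  (g_beta g beta' v yd <= g_beta g beta v yd)%E.
Proof.
move=> le_beta; apply: ge_ereal_sup => _ [y _ <-].
apply: (@le_trans _ _ ((vdot v y)%:E - fconj g y - (beta / 2 * sqnorm (y - yd))%:E)%E).
  apply: leeB; first exact: lexx.
  by rewrite lee_fin; apply: ler_wpM2r; [exact: sqnorm_ge0 | lra].
by apply: ereal_sup_ubound; exists y.
Qed.

Lemma g_beta_empty_dom (beta : R) (v yd : 'cV[R]_n) :
  ~ (exists y, (fconj g y < +oo)%E) -> g_beta g beta v yd = -oo%E.
Proof.
move=> dom_empty; apply/eqP; rewrite eq_le leNye andbT.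
apply: ge_ereal_sup => _ [y _ <-].
case gy: (fconj g y) => [r| |] /=; last 2 first.
- by rewrite addeNy addNye.
- by case: dom_empty; exists y; rewrite gy.
by case: dom_empty; exists y; rewrite gy ltry.
Qed.

Variables (mu beta : R) (u yd yh : 'cV[R]_n) (s : R).
Hypotheses (gs_gtNy : forall y, (-oo < fconj g y)%E)
  (gs_strong : convex_fun (sub_sq (fconj g) mu))
  (yh_prox : is_prox (1 / beta) (fconj g) (yd + beta^-1 *: u) yh)
  (yh_val : fconj g yh = s%:E).

(** The objective of the maximization defining [g_beta(u, yd)], at a point
    [y] where [g^* y = t]; its maximizer is the proximal point [yh]. *)
Definition dual_objective (y : 'cV[R]_n) (t : R) : R :=
  vdot u y - t - beta / 2 * sqnorm (y - yd).

Lemma dual_objective_growth y t : 0 <= mu -> 0 < beta -> fconj g y = t%:E ->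
  dual_objective y t + (mu + beta) / 2 * sqnorm (y - yh) <= dual_objective yh s.
Proof.
move=> mu_ge0 beta_gt0 gy.
have := prox_quadratic_growth gs_gtNy gs_strong mu_ge0 beta_gt0 yh_prox yh_val gy.
by rewrite !sqnorm_shift ?gt_eqF // /dual_objective; lra.
Qed.

(** Smoothness of [g_beta(., yd)]: a descent inequality around [u] with
    gradient [yh] and Lipschitz constant [1/(mu + beta)]. *)
Lemma g_beta_le v : 0 <= mu -> 0 < beta ->
  (g_beta g beta v yd <=
    (vdot v yh - s - beta / 2 * sqnorm (yh - yd) + 1 / (2 * (mu + beta)) * sqnorm (v - u))%:E)%E.
Proof.
move=> mu_ge0 beta_gt0; apply: ge_ereal_sup => _ [y _ <-].
move: (gs_gtNy y); case gy: (fconj g y) => [t| |] // _; last by rewrite /= leNye.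
rewrite -!EFinB lee_fin; have := dual_objective_growth mu_ge0 beta_gt0 gy.
have := young (v - u) (y - yh) (ltr_wpDl mu_ge0 beta_gt0).
have -> : vdot v y = vdot u y + vdot (v - u) yh + vdot (v - u) (y - yh) by coordinatewise; ring.
have -> : vdot v yh = vdot u yh + vdot (v - u) yh by coordinatewise; ring.
by rewrite /dual_objective; lra.
Qed.

Lemma g_beta_fin (beta' : R) v : 0 <= mu -> 0 < beta -> beta <= beta' ->
  exists G, g_beta g beta' v yd = G%:E.
Proof.
move=> mu_ge0 beta_gt0 le_beta.
have lo := g_beta_ge beta' v yd yh_val.
have hi := le_trans (g_beta_antitone v yd le_beta) (g_beta_le v mu_ge0 beta_gt0).
by move: lo hi; case: (g_beta g beta' v yd) => [G| |] // *; exists G.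
Qed.

End SmoothedFunction.

Lemma prox_gradient_step (R : realType) p (f : 'cV[R]_p -> \bar R) (mu L tau : R)
    (xh c x xk x1 : 'cV[R]_p) (fx fk f1 : R) :
  (forall x, (-oo < f x)%E) -> convex_fun (sub_sq f mu) -> 0 <= mu -> 0 < L -> 0 <= tau <= 1 ->
  is_prox (1 / L) f (xh - L^-1 *: c) x1 -> f x1 = f1%:E -> f x = fx%:E -> f xk = fk%:E ->
  f1 + L / 2 * sqnorm (x1 - xh) + (mu + L) / 2 * sqnorm (tau *: x + (1 - tau) *: xk - x1)
  <= tau * fx + (1 - tau) * fk - mu * (1 - tau) * tau / 2 * sqnorm (x - xk)
     + L / 2 * sqnorm (tau *: x + (1 - tau) *: xk - xh)
     + (tau * vdot x c + (1 - tau) * vdot xk c - vdot x1 c).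
Proof.
move=> f_gtNy f_strong mu_ge0 L_gt0 tau01 x1_prox f1E fxE fkE.
have [fw fwE fw_le] := strong_convex_fin f_gtNy f_strong fxE fkE tau01.
have := prox_quadratic_growth f_gtNy f_strong mu_ge0 L_gt0 x1_prox f1E fwE.
have shift v : L / 2 * sqnorm (v - (xh - L^-1 *: c))
    = L / 2 * sqnorm (v - xh) + vdot v c + (L^-1 / 2 * sqnorm c - vdot xh c).
  by coordinatewise; field; lra.
rewrite !shift.
have -> : vdot (tau *: x + (1 - tau) *: xk) c = tau * vdot x c + (1 - tau) * vdot xk c.
  by coordinatewise; ring.
lra.
Qed.

(** Dual step: the smoothness of [g_beta] at [u0] (with gradient [y1]), the
    strong concavity of the maximization defining [g_beta(uk, yd)] (maximized
    at [yh]) and the monotonicity in [beta] combine into the bound on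
    [g_beta(u1)] used by [lemma2]. *)
Lemma smoothed_dual_step (R : realType) n (g : 'cV[R]_n -> \bar R)
    (mu beta beta' tau : R) (u0 uk u1 yd y1 yh : 'cV[R]_n) (s1 sh G1 Gk : R) :
  (forall y, (-oo < fconj g y)%E) -> convex_fun (sub_sq (fconj g) mu) ->
  0 <= mu -> 0 < beta -> beta <= beta' -> 0 <= tau <= 1 ->
  is_prox (1 / beta) (fconj g) (yd + beta^-1 *: u0) y1 -> fconj g y1 = s1%:E ->
  is_prox (1 / beta) (fconj g) (yd + beta^-1 *: uk) yh -> fconj g yh = sh%:E ->
  g_beta g beta u1 yd = G1%:E -> g_beta g beta' uk yd = Gk%:E ->
  G1 + (1 - tau) * vdot uk y1 - vdot u1 y1
  <= (1 - tau) * Gk - tau * s1 + 1 / (2 * (mu + beta)) * sqnorm (u1 - u0)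
     - (1 - tau) / 2 * (tau * beta - (beta' - beta)) * sqnorm (yh - yd).
Proof.
move=> gs_gtNy gs_strong mu_ge0 beta_gt0 le_beta tau01 y1_prox s1E yh_prox shE G1E GkE.
have := g_beta_le gs_gtNy gs_strong y1_prox s1E u1 mu_ge0 beta_gt0.
rewrite G1E lee_fin => smooth.
have tau'_ge0 : 0 <= 1 - tau by lra.
have := dual_objective_growth gs_gtNy gs_strong yh_prox shE mu_ge0 beta_gt0 s1E.
rewrite /dual_objective => /(ler_wpM2l tau'_ge0) growth.
have := g_beta_ge beta' uk yd shE.
rewrite GkE lee_fin => /(ler_wpM2l tau'_ge0) Gk_ge.
have convex_comb : 0 <= tau * sqnorm (y1 - yd) + (1 - tau) * sqnorm (y1 - yh)
    - tau * (1 - tau) * sqnorm (yh - yd).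
  have -> : tau * sqnorm (y1 - yd) + (1 - tau) * sqnorm (y1 - yh)
      - tau * (1 - tau) * sqnorm (yh - yd)
      = sqnorm (tau *: (y1 - yd) + (1 - tau) *: (y1 - yh)) by coordinatewise; ring.
  exact: sqnorm_ge0.
have := mulr_ge0 (ltW beta_gt0) convex_comb.
have := mulr_ge0 tau'_ge0 (mulr_ge0 mu_ge0 (sqnorm_ge0 (y1 - yh))).
lra.
Qed.

Unset Implicit Arguments.
Set Strict Implicit.

Theorem lemma2 (R : realType) (n p : nat)
  (f : 'cV[R]_p -> \bar R) (g : 'cV[R]_n -> \bar R) (K : 'M[R]_(n, p))
  (mu_f mu_gs : R)
  (f_proper : proper_fun f) (f_closed : closed_fun f) (f_convex : convex_fun f)
  (g_proper : proper_fun g) (g_closed : closed_fun g) (g_convex : convex_fun g)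
  (mu_f_ge0 : 0 <= mu_f) (mu_gs_ge0 : 0 <= mu_gs)
  (f_strong : convex_fun (sub_sq f mu_f))
  (gs_strong : convex_fun (sub_sq (fconj g) mu_gs))
  (ydot : 'cV[R]_n) (xhat xk : 'cV[R]_p) (xk_dom : dom f xk)
  (Lk beta_km1 beta_k : R) (Lk_gt0 : 0 < Lk)
  (beta_le : beta_k <= beta_km1) (beta_k_gt0 : 0 < beta_k)
  (y1 : 'cV[R]_n) (x1 : 'cV[R]_p)
  (def_y1 : y1 = prox (1 / beta_k) (fconj g) (ydot + beta_k^-1 *: (K *m xhat)))
  (def_x1 : x1 = prox (1 / Lk) f (xhat - Lk^-1 *: (K^T *m y1))) :
  forall (x : 'cV[R]_p) (tau : R), dom f x -> 0 < tau <= 1 ->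
  (F_beta f g K beta_k x1 ydot
   <= (1 - tau)%:E * F_beta f g K beta_km1 xk ydot
      + tau%:E * Lag f g K x y1
      + (Lk * tau ^+ 2 / 2 * sqnorm (tau^-1 *: (xhat - (1 - tau) *: xk) - x)
         - mu_f * (1 - tau) * tau / 2 * sqnorm (x - xk)
         - tau ^+ 2 / 2 * (Lk + mu_f) * sqnorm (tau^-1 *: (x1 - (1 - tau) *: xk) - x)
         - Lk / 2 * sqnorm (x1 - xhat)
         + 1 / (2 * (mu_gs + beta_k)) * sqnorm (K *m (x1 - xhat))
         - (1 - tau) / 2 * (tau * beta_k - (beta_km1 - beta_k))
             * sqnorm (grad_g_beta g beta_k (K *m xk) ydot - ydot))%:E)%E.
Proof.
move=> x tau x_dom tau_range.
have [f_gtNy _] := f_proper.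
have [gs_gtNy gs_closed] := (fconj_gtNy g_proper, fconj_closed g_proper).
have tau01 : 0 <= tau <= 1 by lra.
have tau_neq0 : tau != 0 by lra.
have [[fx fxE] [fk fkE]] := (dom_fin f_gtNy x_dom, dom_fin f_gtNy xk_dom).
have := prox_spec f_gtNy f_closed f_strong (xhat - Lk^-1 *: (K^T *m y1)) mu_f_ge0 Lk_gt0 x_dom.
rewrite -def_x1 => -[x1_prox [f1 f1E]].
have [[y0 y0_dom]|gs_dom_empty] := pselect (exists y, (fconj g y < +oo)%E); last first.
  by rewrite /F_beta g_beta_empty_dom // f1E addeNy leNye.
have := prox_spec gs_gtNy gs_closed gs_strong (ydot + beta_k^-1 *: (K *m xhat))
  mu_gs_ge0 beta_k_gt0 y0_dom.
rewrite -def_y1 => -[y1_prox [s1 s1E]].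
have [yh_prox [sh shE]] := prox_spec gs_gtNy gs_closed gs_strong
  (ydot + beta_k^-1 *: (K *m xk)) mu_gs_ge0 beta_k_gt0 y0_dom.
have [G1 G1E] := g_beta_fin gs_gtNy gs_strong yh_prox shE (K *m x1) mu_gs_ge0 beta_k_gt0 (lexx _).
have [Gk GkE] := g_beta_fin gs_gtNy gs_strong yh_prox shE (K *m xk) mu_gs_ge0 beta_k_gt0 beta_le.
have primal := prox_gradient_step f_gtNy f_strong mu_f_ge0 Lk_gt0 tau01 x1_prox f1E fxE fkE.
have dual := smoothed_dual_step gs_gtNy gs_strong mu_gs_ge0 beta_k_gt0 beta_le tau01
  y1_prox s1E yh_prox shE G1E GkE.
have rescale1 : Lk * tau ^+ 2 / 2 * sqnorm (tau^-1 *: (xhat - (1 - tau) *: xk) - x)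
    = Lk / 2 * sqnorm (tau *: x + (1 - tau) *: xk - xhat).
  by rewrite -sqnorm_rescale //; ring.
have rescale2 : tau ^+ 2 / 2 * (Lk + mu_f) * sqnorm (tau^-1 *: (x1 - (1 - tau) *: xk) - x)
    = (mu_f + Lk) / 2 * sqnorm (tau *: x + (1 - tau) *: xk - x1).
  by rewrite -sqnorm_rescale //; ring.
rewrite -!vdot_mulmx in primal.
rewrite /F_beta /Lag /grad_g_beta f1E fkE fxE s1E G1E GkE rescale1 rescale2 mulmxBr.
rewrite -?EFinD -?EFinN -?EFinD -?EFinM -?EFinD lee_fin.
lra.
Qed.
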